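(* Let $R$ be a set, $\mathcal{G}:(\mathbf{1},R)\rightarrow(Y,R)$ an object of $\mathrm{2Open}_R$, and $\mathcal{G}_\omega$ its $\omega$-iteration. Then $\mathcal{G}_\omega$, with coalgebra map $(\langle\mathrm{now},\mathrm{ltr}\rangle,\langle\mathrm{hd},\mathrm{tl}\rangle):\mathcal{G}_\omega\rightarrow F_\mathcal{G}\mathcal{G}_\omega$, is a final $F_\mathcal{G}$-coalgebra: for every $F_\mathcal{G}$-coalgebra $\gamma:\mathcal{H}\rightarrow F_\mathcal{G}\mathcal{H}$ there is a unique morphism $\beta:\mathcal{H}\rightarrow\mathcal{G}_\omega$ in $\mathrm{2Open}_R$ with $(\langle\mathrm{now},\mathrm{ltr}\rangle,\langle\mathrm{hd},\mathrm{tl}\rangle)\circ\beta=F_\mathcal{G}(\beta)\circ\gamma$.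
   Context: Fix a set $R$. Objects of $\mathrm{2Open}_R$ are open games $\mathcal{H}:(\mathbf{1},R)\rightarrow(Y_\mathcal{H},R)$ given by a strategy set $\Sigma_\mathcal{H}$, a move set $Y_\mathcal{H}$, a play function $P_\mathcal{H}:\Sigma_\mathcal{H}\rightarrow Y_\mathcal{H}$, an equilibrium function $E_\mathcal{H}:(Y_\mathcal{H}\rightarrow R)\rightarrow\mathcal{P}\Sigma_\mathcal{H}$, and identity coutility $C\,\sigma\,r=r$. A morphism $\beta:\mathcal{H}\rightarrow\mathcal{H}'$ is a pair $\beta_Y:Y_\mathcal{H}\rightarrow Y_{\mathcal{H}'}$, $\beta_\Sigma:\Sigma_\mathcal{H}\rightarrow\Sigma_{\mathcal{H}'}$ with $\beta_Y(P_\mathcal{H}\sigma)=P_{\mathcal{H}'}(\beta_\Sigma\sigma)$ for all $\sigma$, and such that for all $\sigma\in\Sigma_\mathcal{H}$ and $k:Y_{\mathcal{H}'}\rightarrow R$, $\sigma\in E_\mathcal{H}(k\circ\beta_Y)$ implies $\beta_\Sigma(\sigma)\in E_{\mathcal{H}'}(k)$; composition is componentwise. For the fixed $\mathcal{G}$ (data $\Sigma_\mathcal{G},Y,P_\mathcal{G},E_\mathcal{G}$), the functor $F_\mathcal{G}:\mathrm{2Open}_R\rightarrow\mathrm{2Open}_R$ sends $\mathcal{H}$ to the composite game $(Y\rightarrow\mathcal{H})\circ\mathcal{G}$, explicitly: strategies $\Sigma_\mathcal{G}\times(Y\rightarrow\Sigma_\mathcal{H})$, moves $Y\times Y_\mathcal{H}$,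 play $P(\sigma,f)=(P_\mathcal{G}\sigma,P_\mathcal{H}(f(P_\mathcal{G}\sigma)))$, identity coutility, and $(\sigma,f)\in E_{F_\mathcal{G}\mathcal{H}}(k)$ iff $\sigma\in E_\mathcal{G}(\lambda y.\,k(y,P_\mathcal{H}(f\,y)))$ and $f(y')\in E_\mathcal{H}(\lambda z.\,k(y',z))$ for all $y'\in Y$; on a morphism $\beta$, $(F_\mathcal{G}\beta)_\Sigma(\sigma,f)=(\sigma,\beta_\Sigma\circ f)$ and $(F_\mathcal{G}\beta)_Y(y,z)=(y,\beta_Y z)$. An $F_\mathcal{G}$-coalgebra is an object $\mathcal{H}$ with a morphism $\gamma:\mathcal{H}\rightarrow F_\mathcal{G}\mathcal{H}$. Notation: $Y^*$ finite words over $Y$, $\epsilon$ the empty word, $Y^\omega$ infinite streams over $Y$, $y\mathrel{::}w$ prepending, $\mathrm{hd}(y_0y_1\dots)=y_0$, $\mathrm{tl}(y_0y_1y_2\dots)=y_1y_2\dots$. For $\sigma:Y^*\rightarrow\Sigma_\mathcal{G}$, $\sigma_0=\mathrm{now}(\sigma)=\sigma(\epsilon)$ and $\sigma'=\mathrm{ltr}(\sigma)=\lambda y.\lambda w.\,\sigma(yw)$. The $\omega$-iteration $\mathcal{G}_\omega:(\mathbf{1},R)\rightarrow(Y^\omega,R)$ has strategies $\Sigma_\omega=Y^*\rightarrow\Sigma_\mathcal{G}$, moves $Y^\omega$, identity coutility, play function $P_\omega$ the unique function with $P_\omega\sigma=P_\mathcal{G}\sigma_0\mathrel{::}P_\omega(\lambda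 z.\,\sigma(P_\mathcal{G}\sigma_0\mathrel{::}z))$, and equilibrium function $E_\omega$ the greatest fixed point of the monotone operator $\Phi$ on $(\mathcal{P}\Sigma_\omega)^{(Y^\omega\rightarrow R)}$ (ordered pointwise by inclusion) given by: $\sigma\in\Phi(\Gamma)(k)$ iff $\sigma_0\in E_\mathcal{G}(\lambda y.\,k(y\mathrel{::}P_\omega(\sigma'y)))$ and for all $y'\in Y$, $\sigma'y'\in\Gamma(\lambda z.\,k(y'\mathrel{::}z))$. *)

From Stdlib Require Import List.
Import ListNotations.
Set Implicit Arguments.

(* An object H : (1,R) -> (Y_H,R) of 2Open_R.  The coutility is the identity,
   so it is not recorded.  Subsets P(Sigma) are predicates Sigma -> Prop. *)
Record Game (R : Type) := mkGame {
  Sig : Type;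
  Mov : Type;
  play : Sig -> Mov;
  eqm : (Mov -> R) -> Sig -> Prop
}.
Arguments Sig {R}. Arguments Mov {R}. Arguments play {R}. Arguments eqm {R}.

Definition is_morphism {R : Type} (H H' : Game R)
  (bY : Mov H -> Mov H') (bS : Sig H -> Sig H') : Prop :=
  (forall s, bY (play H s) = play H' (bS s)) /\
  (forall (s : Sig H) (k : Mov H' -> R),
      eqm H (fun y => k (bY y)) s -> eqm H' k (bS s)).

(* The functor F_G on objects: the composite game (Y -> H) o G. *)
Definition FG {R : Type} (G H : Game R) : Game R :=
  @mkGame R (Sig G * (Mov G -> Sig H)) (Mov G * Mov H)
    (fun p => let (s, f) := p in (play G s, play H (f (play G s))))
    (fun k p => let (s, f) := p in
       eqm G (fun y => k (y, play H (f y))) s /\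
       forall y', eqm H (fun z => k (y', z)) (f y')).

Definition FG_mapS {R : Type} (G H H' : Game R) (bS : Sig H -> Sig H')
  (p : Sig (FG G H)) : Sig (FG G H') := (fst p, fun y => bS (snd p y)).
Definition FG_mapY {R : Type} (G H H' : Game R) (bY : Mov H -> Mov H')
  (p : Mov (FG G H)) : Mov (FG G H') := (fst p, bY (snd p)).

(* Infinite streams Y^omega are represented as functions nat -> Y;
   finite words Y^* as lists. *)
Definition hd {Y : Type} (s : nat -> Y) : Y := s 0.
Definition tl {Y : Type} (s : nat -> Y) : nat -> Y := fun n => s (S n).
Definition now {Y S : Type} (sigma : list Y -> S) : S := sigma [].
Definition ltr {Y S : Type} (sigma : list Y -> S) : Y -> list Y -> S :=
  fun y w => sigma (y :: w).

Section Omega.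
Variables (R : Type) (G : Game R).
Local Notation Y := (Mov G).
Local Notation SG := (Sig G).

(* P_omega: P_omega sigma = P_G sigma_0 :: P_omega (fun z => sigma (P_G sigma_0 :: z)),
   computed coordinatewise. *)
Fixpoint Pomega (sigma : list Y -> SG) (n : nat) : Y :=
  match n with
  | O => play G (sigma [])
  | S m => Pomega (fun z => sigma (play G (sigma []) :: z)) m
  end.

Definition Phi (Gam : ((nat -> Y) -> R) -> (list Y -> SG) -> Prop)
  (k : (nat -> Y) -> R) (sigma : list Y -> SG) : Prop :=
  eqm G (fun y => k (fun n => match n with O => y | S m => Pomega (ltr sigma y) m end))
        (now sigma) /\
  forall y', Gam (fun z => k (fun n => match n with O => y' | S m => z m end))
                 (ltr sigma y').

(* Greatest fixed point of Phi (Knaster-Tarski: union of all post-fixed points). *)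
Definition Eomega (k : (nat -> Y) -> R) (sigma : list Y -> SG) : Prop :=
  exists Gam : ((nat -> Y) -> R) -> (list Y -> SG) -> Prop,
    (forall k' s', Gam k' s' -> Phi Gam k' s') /\ Gam k sigma.

Definition Gomega : Game R := @mkGame R (list Y -> SG) (nat -> Y) Pomega Eomega.
End Omega.

Definition omega_coalgS {R : Type} (G : Game R) (sigma : Sig (Gomega G))
  : Sig (FG G (Gomega G)) := (now sigma, ltr sigma).
Definition omega_coalgY {R : Type} (G : Game R) (s : Mov (Gomega G))
  : Mov (FG G (Gomega G)) := (hd s, tl s).
Arguments omega_coalgS {R} G sigma.
Arguments omega_coalgY {R} G s.
Arguments FG_mapS {R} G {H H'} bS p.
Arguments FG_mapY {R} G {H H'} bY p.

(** The mediating morphism is the anamorphism of the coalgebra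
    [(gY, gS) : H -> F_G H]: the strategy of [G_omega] assigned to [s] plays,
    after the word [w], the [G]-strategy reached from [s] by following [gS]
    along [w], and the stream assigned to a move of [H] is read off by
    iterating [gY].  The coalgebra equations force these formulas (a stream,
    resp. a word-indexed strategy, is determined by its head and tail, resp.
    by [now] and [ltr]), which gives uniqueness.  That the anamorphism
    preserves equilibria is a coinduction: the image of the equilibria of [H]
    is a post-fixed point of [Phi], hence contained in its greatest fixed
    point [Eomega]. *)
From Stdlib Require Import List FunctionalExtensionality.
Import ListNotations.

Definition scons {Y : Type} (y : Y) (z : nat -> Y) : nat -> Y :=
  fun n => match n with O => y | S m => z m end.

Lemma play_FG {R : Type} (G H : Game R) (p : Sig (FG G H)) :
  play (FG G H) p = (play G (fst p), play H (snd p (play G (fst p)))).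
Proof. now destruct p. Qed.

Lemma eqm_FG {R : Type} (G H : Game R) (k : Mov (FG G H) -> R)
    (p : Sig (FG G H)) :
  eqm (FG G H) k p <->
  eqm G (fun y => k (y, play H (snd p y))) (fst p) /\
  forall y', eqm H (fun z => k (y', z)) (snd p y').
Proof. now destruct p. Qed.

Lemma eqm_ext {R : Type} {H : Game R} {k k' : Mov H -> R} {s : Sig H} :
  eqm H k s -> (forall h, k h = k' h) -> eqm H k' s.
Proof. intros Hs Hk. now rewrite <- (functional_extensionality k k' Hk). Qed.

Section Omega.
Context {R : Type} {G : Game R}.

Lemma Eomega_coind
    {Gam : ((nat -> Mov G) -> R) -> (list (Mov G) -> Sig G) -> Prop} {k s} :
  (forall k' s', Gam k' s' -> Phi G Gam k' s') -> Gam k s -> Eomega G k s.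
Proof. intros Hpost Hs. now exists Gam. Qed.

Lemma Eomega_postfixed {k s} : Eomega G k s -> Phi G (Eomega G) k s.
Proof.
  intros [Gam [Hpost Hs]].
  destruct (Hpost k s Hs) as [Hnow Hltr].
  split; [exact Hnow |].
  intro y'. exact (Eomega_coind Hpost (Hltr y')).
Qed.

Lemma omega_coalg_morphism :
  is_morphism (Gomega G) (FG G (Gomega G)) (omega_coalgY G) (omega_coalgS G).
Proof.
  split; [reflexivity |].
  intros s k Hs. exact (Eomega_postfixed Hs).
Qed.

End Omega.

Section Unfold.
Context {R : Type} {G H : Game R}.
Variables (gY : Mov H -> Mov (FG G H)) (gS : Sig H -> Sig (FG G H)).

Fixpoint unfoldS (s : Sig H) (w : list (Mov G)) : Sig G :=
  match w with
  | [] => fst (gS s)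
  | y :: w' => unfoldS (snd (gS s) y) w'
  end.

Fixpoint unfoldY (h : Mov H) (n : nat) : Mov G :=
  match n with
  | O => fst (gY h)
  | S m => unfoldY (snd (gY h)) m
  end.

Lemma unfoldY_coalg h :
  omega_coalgY G (unfoldY h) = FG_mapY G (H' := Gomega G) unfoldY (gY h).
Proof. reflexivity. Qed.

Lemma unfoldS_coalg s :
  omega_coalgS G (unfoldS s) = FG_mapS G (H' := Gomega G) unfoldS (gS s).
Proof. reflexivity. Qed.

Lemma unfoldY_scons h : unfoldY h = scons (fst (gY h)) (unfoldY (snd (gY h))).
Proof. apply functional_extensionality. now intros []. Qed.

Lemma unfoldY_unique (bY : Mov H -> nat -> Mov G) :
  (forall h, omega_coalgY G (bY h) = FG_mapY G (H' := Gomega G) bY (gY h)) ->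
  bY = unfoldY.
Proof.
  intro Hb.
  apply functional_extensionality. intro h.
  apply functional_extensionality. intro n. revert h.
  induction n as [|n IH]; intro h.
  - exact (f_equal fst (Hb h)).
  - simpl. rewrite <- IH. exact (equal_f (f_equal snd (Hb h)) n).
Qed.

Lemma unfoldS_unique (bS : Sig H -> list (Mov G) -> Sig G) :
  (forall s, omega_coalgS G (bS s) = FG_mapS G (H' := Gomega G) bS (gS s)) ->
  bS = unfoldS.
Proof.
  intro Hb.
  apply functional_extensionality. intro s.
  apply functional_extensionality. intro w. revert s.
  induction w as [|y w IH]; intro s.
  - exact (f_equal fst (Hb s)).
  - simpl. rewrite <- IH. exact (equal_f (equal_f (f_equal snd (Hb s)) y) w).
Qed.

Hypothesis gamma_morphism : is_morphism H (FG G H) gY gS.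

Lemma Pomega_unfold s : unfoldY (play H s) = Pomega G (unfoldS s).
Proof.
  apply functional_extensionality. intro n. revert s.
  induction n as [|n IH]; intro s;
    simpl; rewrite (proj1 gamma_morphism s), play_FG; simpl.
  - reflexivity.
  - apply IH.
Qed.

Lemma Eomega_unfold s k :
  eqm H (fun h => k (unfoldY h)) s -> Eomega G k (unfoldS s).
Proof.
  intro Hs.
  apply (Eomega_coind (Gam := fun k' sg =>
    exists s', sg = unfoldS s' /\ eqm H (fun h => k' (unfoldY h)) s'));
    [| eauto].
  intros k' sg [s' [-> Hs']].
  assert (HFG : eqm (FG G H)
                  (fun p => k' (scons (fst p) (unfoldY (snd p)))) (gS s')).
  { apply (proj2 gamma_morphism).
    apply (eqm_ext Hs'). intro h. now rewrite <- unfoldY_scons. }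
  apply eqm_FG in HFG as [Hnow Hltr]. simpl in Hnow.
  split.
  - apply (eqm_ext Hnow). intro y. now rewrite Pomega_unfold.
  - intro y'. exists (snd (gS s') y'). split; [reflexivity | exact (Hltr y')].
Qed.

Lemma unfold_morphism : is_morphism H (Gomega G) unfoldY unfoldS.
Proof. split; [exact Pomega_unfold | exact Eomega_unfold]. Qed.

End Unfold.

Theorem theorem16 (R : Type) (G : Game R) :
  is_morphism (Gomega G) (FG G (Gomega G)) (omega_coalgY G) (omega_coalgS G) /\
  forall (H : Game R) (gY : Mov H -> Mov (FG G H)) (gS : Sig H -> Sig (FG G H)),
    is_morphism H (FG G H) gY gS ->
    exists (bY : Mov H -> Mov (Gomega G)) (bS : Sig H -> Sig (Gomega G)),
      (is_morphism H (Gomega G) bY bS /\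
       (fun x => omega_coalgY G (bY x)) = (fun x => FG_mapY G bY (gY x)) /\
       (fun x => omega_coalgS G (bS x)) = (fun x => FG_mapS G bS (gS x))) /\
      forall (bY' : Mov H -> Mov (Gomega G)) (bS' : Sig H -> Sig (Gomega G)),
        is_morphism H (Gomega G) bY' bS' ->
        (fun x => omega_coalgY G (bY' x)) = (fun x => FG_mapY G bY' (gY x)) ->
        (fun x => omega_coalgS G (bS' x)) = (fun x => FG_mapS G bS' (gS x)) ->
        bY' = bY /\ bS' = bS.
Proof.
  split; [exact omega_coalg_morphism |].
  intros H gY gS Hgamma.
  exists (unfoldY gY), (unfoldS gS).
  split.
  - split; [exact (unfold_morphism gY gS Hgamma) |].
    split; apply functional_extensionality;
      [exact (unfoldY_coalg gY) | exact (unfoldS_coalg gS)].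
  - intros bY' bS' _ HY HS.
    split; [apply unfoldY_unique | apply unfoldS_unique]; apply equal_f;
      assumption.
Qed.
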